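(* Let $1<w\le 2$, $1<h\le 2$, $n\ge 2$ and $\frac12\le y_1<\dots<y_n\le h-\frac12$. Every layout of these $n$ squares has gap at most $\frac{w+h-2}{n-1}$.
   Context: The instance is the strip $T=[0,w]\times[0,h]$ with the given $y_i$. A layout is a pair $(\mathbf x,\prec)$ where $\mathbf x=(x_1,\dots,x_n)$ with $x_i\in[\frac12,w-\frac12]$, and $\prec$ is a total order (stacking order) on the squares $s_1,\dots,s_n$, where $s_i$ is the closed axis-parallel unit square with centre $(x_i,y_i)$. If $s_i\prec s_j$ we say $s_j$ is in front of $s_i$ and $s_i$ is behind $s_j$. A point $p$ on the boundary of $s_i$ is visible if every square $s_j$ ($j\neq i$) containing $p$ is behind $s_i$. The visible perimeter of $s_i$ is the total length of its visible boundary points; the gap of $s_i$ is its visible perimeter minus $2$, and the gap of a layout is the minimum of the gaps of its squares. *)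

From HB Require Import structures.
From mathcomp Require Import all_boot all_order all_algebra.
From mathcomp Require Import all_classical all_reals.
From mathcomp Require Import ereal lebesgue_stieltjes_measure lebesgue_measure.
Set Implicit Arguments. Unset Strict Implicit. Unset Printing Implicit Defensive.
Import Order.TTheory GRing.Theory Num.Theory.
Local Open Scope classical_set_scope.
Local Open Scope ring_scope.

Section Squares.
Variable R : realType.

Definition in_square (cx cy : R) (p : R * R) : Prop :=
  `|p.1 - cx| <= 1/2 /\ `|p.2 - cy| <= 1/2.

(* a layout: centres x, fixed heights y, and a stacking order prec
   (prec i j  means  s_i is behind s_j, i.e. s_j is in front of s_i) *)
Definition visible n (x y : 'I_n -> R) (prec : 'I_n -> 'I_n -> Prop)
  (i : 'I_n) (p : R * R) : Prop :=
  forall j : 'I_n, j <> i -> in_square (x j) (y j) p -> prec j i.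

(* Visible perimeter: the boundary of s_i is the union of its four sides;
   the visible length is the sum over the four sides of the (Lebesgue)
   length of the set of visible points of that side (the four corners
   have length zero, so this is the total length of the visible
   boundary points). *)
Definition visible_side n (x y : 'I_n -> R) (prec : 'I_n -> 'I_n -> Prop)
  (i : 'I_n) (a b : R) (pt : R -> R * R) : set R :=
  [set t : R | a <= t <= b /\ visible x y prec i (pt t)].

Definition visible_perimeter n (x y : 'I_n -> R) (prec : 'I_n -> 'I_n -> Prop)
  (i : 'I_n) : \bar R :=
  let L := x i - 1/2 in let Rt := x i + 1/2 in
  let B := y i - 1/2 in let T := y i + 1/2 in
  (lebesgue_measure (visible_side x y prec i L Rt (fun t => (t, B)))
 + lebesgue_measure (visible_side x y prec i L Rt (fun t => (t, T)))
 + lebesgue_measure (visible_side x y prec i B T (fun t => (L, t)))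
 + lebesgue_measure (visible_side x y prec i B T (fun t => (Rt, t))))%E.

Definition square_gap n (x y : 'I_n -> R) (prec : 'I_n -> 'I_n -> Prop)
  (i : 'I_n) : \bar R :=
  (visible_perimeter x y prec i - 2%:E)%E.

Definition layout_gap n (x y : 'I_n -> R) (prec : 'I_n -> 'I_n -> Prop)
  : \bar R :=
  \big[Order.min/+oo%E]_(i < n) square_gap x y prec i.

Definition strict_total_order n (prec : 'I_n -> 'I_n -> Prop) : Prop :=
  (forall i, ~ prec i i) /\
  (forall i j k, prec i j -> prec j k -> prec i k) /\
  (forall i j, i <> j -> prec i j \/ prec j i).

End Squares.

(* A square [s_i] is seen through a vertical line [X = t] on both its bottom
   and its top only if it is in front of every square meeting that line:
   since the centres lie in a strip of height at most 2, any other square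
   meeting the line covers the bottom or the top point of [s_i] on it.
   Hence the columns seen through two opposite sides are disjoint for
   different squares, so the horizontal visible lengths sum to at most
   [n + w]; symmetrically the vertical ones sum to at most [n + h].  The
   frontmost square has perimeter 4, so the remaining [n - 1] gaps sum to
   at most [2n + w + h - 4 - 2(n - 1) = w + h - 2]. *)

From HB Require Import structures.
From mathcomp Require Import all_boot all_order all_algebra.
From mathcomp Require Import all_classical all_reals.
From mathcomp Require Import ereal lebesgue_stieltjes_measure lebesgue_measure measure.
From mathcomp Require Import lra.
Import Order.TTheory GRing.Theory Num.Theory.
Local Open Scope classical_set_scope.
Local Open Scope ring_scope.
Set Implicit Arguments. Unset Strict Implicit.

Section LebesgueLength.
Variable R : realType.
Local Notation mu := (@lebesgue_measure R).

(* Only meaningful on sets of finite measure: [fine +oo = 0]. *)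
Definition len (S : set R) : R := fine (mu S).

Lemma lebesgue_measure_itv_cc (a b : R) : a <= b -> mu [set` `[a, b]] = (b - a)%:E.
Proof.
move=> ab; rewrite lebesgue_measure_itv /= lte_fin.
have [_|ba] := ltP a b; first by rewrite EFinB.
have -> : b = a by apply/eqP; rewrite eq_le ab ba.
by rewrite subrr.
Qed.

Lemma len_itv_cc (a b : R) : a <= b -> len [set` `[a, b]] = b - a.
Proof. by move=> ab; rewrite /len lebesgue_measure_itv_cc. Qed.

Lemma measure_sub_itvE (a b : R) (S : set R) : a <= b -> measurable S ->
  S `<=` [set` `[a, b]] -> mu S = (len S)%:E.
Proof.
move=> ab mS Sab; rewrite /len fineK // ge0_fin_numE ?measure_ge0 //.
apply: (le_lt_trans (y := mu [set` `[a, b]])); last by rewrite lebesgue_measure_itv_cc ?ltry.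
by apply: le_measure => //; rewrite inE //; exact: measurable_itv.
Qed.

Lemma len_sub_itv (a b : R) (S : set R) : a <= b -> measurable S ->
  S `<=` [set` `[a, b]] -> len S <= b - a.
Proof.
move=> ab mS Sab; rewrite -lee_fin -(measure_sub_itvE ab mS Sab).
by rewrite -lebesgue_measure_itv_cc //; apply: le_measure; rewrite ?inE.
Qed.

Lemma lenD_le_setI (a b : R) (A B : set R) : a <= b ->
  measurable A -> measurable B -> A `<=` [set` `[a, b]] -> B `<=` [set` `[a, b]] ->
  len A + len B <= (b - a) + len (A `&` B).
Proof.
move=> ab mA mB Aab Bab.
have mU : measurable (A `|` B) by exact: measurableU.
have Uab : A `|` B `<=` [set` `[a, b]] by move=> t [/Aab|/Bab].
have Iab : A `&` B `<=` [set` `[a, b]] by move=> t [/Aab].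
have muA : (mu A < +oo)%E by rewrite (measure_sub_itvE ab mA Aab) ltry.
have : mu (A `|` B) = (mu A + mu B - mu (A `&` B))%E by exact: measureUfinl.
rewrite (measure_sub_itvE ab mU Uab) (measure_sub_itvE ab mA Aab).
rewrite (measure_sub_itvE ab mB Bab) (measure_sub_itvE ab (measurableI _ _ mA mB) Iab).
rewrite -EFinD => -[lenU].
by have := len_sub_itv ab mU Uab; lra.
Qed.

Lemma sum_len_disjoint_le n (E : 'I_n -> set R) (a b : R) : a <= b ->
  (forall i, measurable (E i)) -> (forall i, E i `<=` [set` `[a, b]]) ->
  (forall i j, i != j -> E i `&` E j = set0) ->
  \sum_(i < n) len (E i) <= b - a.
Proof.
move=> ab mE Eab dE.
have tE : trivIset setT E.
  move=> i j _ _ [t Ht]; apply/eqP; apply: contraT => /dE ij.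
  by move: Ht; rewrite ij.
have mU : measurable (\big[setU/set0]_(i < n) E i) by exact: bigsetU_measurable.
have Uab : \big[setU/set0]_(i < n) E i `<=` [set` `[a, b]].
  by apply: (big_ind (fun S => S `<=` [set` `[a, b]])) => // S1 S2 H1 H2 t [/H1|/H2].
have : mu (\big[setU/set0]_(i < n) E i) = (\sum_(i < n) mu (E i))%E.
  exact: measure_bigsetU_ord.
rewrite (measure_sub_itvE ab mU Uab).
rewrite (eq_bigr (fun i => (len (E i))%:E)) => [|i _]; last exact: (measure_sub_itvE ab).
by rewrite sumEFin => -[<-]; exact: len_sub_itv.
Qed.

Lemma measurable_implyl (S : set R) (P : Prop) :
  measurable S -> measurable [set t | S t -> P].
Proof.
move=> mS; have [p|np] := pselect P.
  rewrite (_ : [set t | S t -> P] = setT); first exact: measurableT.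
  by apply/seteqP; split => // t _ _.
rewrite (_ : [set t | S t -> P] = ~` S); first exact: measurableC.
by apply/seteqP; split => t /= H // /H.
Qed.

End LebesgueLength.

Section Visibility.
Variables (R : realType) (n : nat) (x y : 'I_n -> R) (prec : 'I_n -> 'I_n -> Prop).

Lemma measurable_in_square_row (cx cy c : R) :
  measurable [set t | in_square cx cy (t, c)].
Proof.
have [K|nK] := pselect (`|c - cy| <= 1/2).
  rewrite (_ : [set t | _] = [set` `[cx - 1/2, cx + 1/2]]); first exact: measurable_itv.
  by apply/seteqP; split => t; rewrite /= in_itv /= -ler_distl; [case|].
rewrite (_ : [set t | _] = set0); first exact: measurable0.
by apply/seteqP; split => t // [].
Qed.

Lemma measurable_visible_row (i : 'I_n) (a b c : R) :
  measurable (visible_side x y prec i a b (fun t => (t, c))).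
Proof.
rewrite (_ : visible_side _ _ _ _ _ _ _ = [set` `[a, b]] `&`
  \bigcap_(j in [set: 'I_n]) [set t | in_square (x j) (y j) (t, c) -> j <> i -> prec j i]).
  apply: measurableI; first exact: measurable_itv.
  apply: fin_bigcap_measurable; first exact: finite_finset.
  by move=> j _; apply: measurable_implyl; exact: measurable_in_square_row.
apply/seteqP; split => t /=; rewrite in_itv /=.
  by case=> ab vis; split=> // j _ sq ji; exact: vis.
by case=> ab vis; split=> // j ji sq; exact: vis.
Qed.

Lemma visible_side_swap (i : 'I_n) (a b c : R) :
  visible_side y x prec i a b (fun t => (t, c)) =
  visible_side x y prec i a b (fun t => (c, t)).
Proof.
apply/seteqP; split=> t [ab vis]; split=> // j ji [? ?]; exact: vis.
Qed.

Definition visible_bottom (i : 'I_n) :=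
  visible_side x y prec i (x i - 1/2) (x i + 1/2) (fun t => (t, y i - 1/2)).

Definition visible_top (i : 'I_n) :=
  visible_side x y prec i (x i - 1/2) (x i + 1/2) (fun t => (t, y i + 1/2)).

Definition visible_horizontal_length (i : 'I_n) : R :=
  len (visible_bottom i) + len (visible_top i).

Lemma visible_side_sub_itv (i : 'I_n) (a b : R) (pt : R -> R * R) :
  visible_side x y prec i a b pt `<=` [set` `[a, b]].
Proof. by move=> t [ab _]; rewrite /= in_itv. Qed.

Lemma lebesgue_measure_visible_row (i : 'I_n) (c : R) :
  lebesgue_measure (visible_side x y prec i (x i - 1/2) (x i + 1/2) (fun t => (t, c)))
  = (len (visible_side x y prec i (x i - 1/2) (x i + 1/2) (fun t => (t, c))))%:E.
Proof.
have ab : x i - 1/2 <= x i + 1/2 by lra.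
apply: (measure_sub_itvE ab); [exact: measurable_visible_row | exact: visible_side_sub_itv].
Qed.

(* The point of [s_j] that hides [s_i] is [(t, y_i - 1/2)] if [y_j <= y_i]
   and [(t, y_i + 1/2)] otherwise. *)
Lemma prec_of_visible_bottom_top (i j : 'I_n) (t : R) : j <> i ->
  visible_bottom i t -> visible_top i t ->
  `|t - x j| <= 1/2 -> `|y i - y j| <= 1 -> prec j i.
Proof.
move=> ji [_ vb] [_ vt] txj; rewrite ler_distl => /andP[yl yr].
have [yji|yij] := lerP (y j) (y i).
  by apply: vb ji _; split=> //=; rewrite ler_distl; apply/andP; split; lra.
by apply: vt ji _; split=> //=; rewrite ler_distl; apply/andP; split; lra.
Qed.

Lemma visible_horizontal_length_front (f : 'I_n) :
  (forall j, j <> f -> prec j f) -> visible_horizontal_length f = 2.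
Proof.
move=> front.
have full a b pt : visible_side x y prec f a b pt = [set` `[a, b]].
  apply/seteqP; split => t; first exact: visible_side_sub_itv.
  by rewrite /= in_itv /= => ab; split => // j jf _; exact: front.
rewrite /visible_horizontal_length /visible_bottom /visible_top !full !len_itv_cc; lra.
Qed.

Lemma sum_visible_horizontal_length_le (w : R) : 0 <= w ->
  (forall i, ~ prec i i) -> (forall i j k, prec i j -> prec j k -> prec i k) ->
  (forall i, 1/2 <= x i <= w - 1/2) -> (forall i j, `|y i - y j| <= 1) ->
  \sum_(i < n) visible_horizontal_length i <= n%:R + w.
Proof.
move=> w0 irr trans hx hy.
pose D i := visible_bottom i `&` visible_top i.
have mD i : measurable (D i) by apply: measurableI; exact: measurable_visible_row.
apply: (@le_trans _ _ (\sum_(i < n) (1 + len (D i)))).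
  apply: ler_sum => i _; have ab : x i - 1/2 <= x i + 1/2 by lra.
  have := lenD_le_setI (A := visible_bottom i) (B := visible_top i) ab
    (measurable_visible_row i _ _ _) (measurable_visible_row i _ _ _)
    (@visible_side_sub_itv i _ _ _) (@visible_side_sub_itv i _ _ _).
  rewrite /visible_horizontal_length /D; lra.
rewrite big_split /= sumr_const card_ord lerD2l -[w]subr0.
apply: sum_len_disjoint_le => //.
  move=> i t [[/andP[t1 t2] _] _]; rewrite /= in_itv /=.
  by have := hx i => /andP[? ?]; apply/andP; split; lra.
move=> i j /eqP ij; apply/seteqP; split => // t [[bi ti] [bj tj]].
have ji : j <> i by move=> e; apply: ij.
have pji : prec j i.
  by apply: (prec_of_visible_bottom_top ji bi ti) => //; rewrite ler_distl; exact: bj.1.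
have pij : prec i j.
  by apply: (prec_of_visible_bottom_top ij bj tj) => //; rewrite ler_distl; exact: bi.1.
by case: (irr i (trans _ _ _ pij pji)).
Qed.

End Visibility.

(* Transposing the layout turns the left and right sides of [s_i] into its
   bottom and top sides. *)
Lemma visible_perimeterE (R : realType) n (x y : 'I_n -> R) prec i :
  visible_perimeter x y prec i =
  (visible_horizontal_length x y prec i + visible_horizontal_length y x prec i)%:E.
Proof.
have column c : lebesgue_measure
    (visible_side x y prec i (y i - 1/2) (y i + 1/2) (fun t => (c, t))) =
  (len (visible_side y x prec i (y i - 1/2) (y i + 1/2) (fun t => (t, c))))%:E.
  by rewrite -visible_side_swap lebesgue_measure_visible_row.
rewrite /visible_perimeter !lebesgue_measure_visible_row !column -!EFinD.
by rewrite /visible_horizontal_length /visible_bottom /visible_top addrA.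
Qed.

Lemma exists_front n (prec : 'I_n -> 'I_n -> Prop) : strict_total_order prec ->
  (0 < n)%N -> exists f : 'I_n, forall j, j <> f -> prec j f.
Proof.
move=> [irr [trans tot]] n0.
pose behind i := #|[set j | `[< prec j i >]]%SET|.
have [f _ fmax] := @arg_maxnP _ (Ordinal n0) xpredT behind isT.
exists f => j jf; apply: contrapT => njf.
have fj : prec f j.
  have fnej : f <> j by move=> e; apply: jf.
  by case: (tot f j fnej).
have : (behind f < behind j)%N.
  apply: proper_card; apply/properP; split.
    by apply/fintype.subsetP => k; rewrite !inE => kf; exact: trans fj.
  by exists f; rewrite !inE //; apply/negP => /asboolP /irr.
by rewrite ltnNge => /negP; apply; exact: fmax.
Qed.

Lemma bigmin_le_mean_off (R : realType) n (F : 'I_n -> R) (f : 'I_n) : (1 < n)%N ->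
  (\big[Order.min/+oo%E]_(i < n) (F i)%:E <=
   ((\sum_(i < n | i != f) F i) / n.-1%:R)%:E)%E.
Proof.
move=> n1; set m := _ / _.
have n1_gt0 : (0 < n.-1)%N by rewrite -subn1 subn_gt0.
rewrite leNgt; apply/negP => mF.
have Fgt i : m < F i by rewrite -lte_fin; exact: lt_le_trans mF (bigmin_le _ i _).
have /card_gt0P [g] : (0 < #|predC1 f|)%N by rewrite cardC1 card_ord.
rewrite !inE => gf.
have : \sum_(i < n | i != f) m < \sum_(i < n | i != f) F i.
  by apply: ltr_sum => [|i _]; [apply/hasP; exists g; rewrite ?mem_index_enum | exact: Fgt].
rewrite sumr_const cardC1 card_ord -mulr_natr /m divfK ?ltxx //.
by rewrite pnatr_eq0 -lt0n.
Qed.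

Unset Implicit Arguments.

Theorem lemma4 (R : realType) (w h : R) (n : nat) (y : 'I_n -> R)
  (hw : 1 < w <= 2) (hh : 1 < h <= 2) (hn : (2 <= n)%N)
  (hy_incr : forall i j : 'I_n, (i < j)%N -> y i < y j)
  (hy_range : forall i : 'I_n, 1/2 <= y i <= h - 1/2)
  (x : 'I_n -> R) (prec : 'I_n -> 'I_n -> Prop)
  (hx : forall i : 'I_n, 1/2 <= x i <= w - 1/2)
  (hprec : strict_total_order prec) :
  (layout_gap x y prec <= ((w + h - 2) / (n - 1)%:R)%:E)%E.
Proof.
case/andP: hw => w1 w2; case/andP: hh => h1 h2.
have [irr [trans _]] := hprec.
have y_close i j : `|y i - y j| <= 1.
  have /andP[? ?] := hy_range i; have /andP[? ?] := hy_range j.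
  by rewrite ler_distl; apply/andP; split; lra.
have x_close i j : `|x i - x j| <= 1.
  have /andP[? ?] := hx i; have /andP[? ?] := hx j.
  by rewrite ler_distl; apply/andP; split; lra.
pose p i := visible_horizontal_length x y prec i + visible_horizontal_length y x prec i.
have sum_p : \sum_(i < n) p i <= n%:R + w + (n%:R + h).
  by rewrite big_split; apply: lerD; apply: sum_visible_horizontal_length_le => //; lra.
have [f front] := exists_front hprec (ltnW hn).
have pf : p f = 4 by rewrite /p !visible_horizontal_length_front //; lra.
have -> : layout_gap x y prec = \big[Order.min/+oo%E]_(i < n) (p i - 2)%:E.
  by apply: eq_bigr => i _; rewrite /square_gap visible_perimeterE.
apply: le_trans (bigmin_le_mean_off _ f hn) _; rewrite lee_fin subn1.
apply: ler_wpM2r; first by rewrite invr_ge0 ler0n.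
have nE : n%:R = n.-1%:R + 1 :> R by rewrite natr1 prednK // ltnW.
move: sum_p; rewrite (bigD1 f) //= sumrB sumr_const cardC1 card_ord -mulr_natr.
lra.
Qed.
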